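(* Let $N\ge 1$, fix a right transversal of $\Gamma_1(N)$ in $\mathrm{SL}_2(\mathbb{Z})$ with right coset representative function $g\mapsto\overline{g}$, and for $x,y\in\mathrm{SL}_2(\mathbb{Z})$ let $U(x,y)=xy\,(\overline{xy})^{-1}$. Let $T=\begin{pmatrix}1&1\\0&1\end{pmatrix}$. Let $a$ be an integer written as $a=qN+r$ with $q\in\mathbb{Z}$ and $0\le r<N$, and let $M\in\mathrm{SL}_2(\mathbb{Z})$. Then $$U(\overline{M},T^a)=U(\overline{M},T^N)^q\,U(\overline{M},T^r).$$
   Context: $\Gamma_1(N)$ is the subgroup of $\mathrm{SL}_2(\mathbb{Z})$ of matrices $\begin{pmatrix}a&b\\c&d\end{pmatrix}$ with $c\equiv 0$ and $a\equiv d\equiv 1 \pmod N$. A right transversal $\mathcal{T}$ of a subgroup $H$ in a group $G$ is a subset of $G$ containing the identity and exactly one element of each right coset $Hg$; the right coset representative function sends $g$ to the unique $\overline{g}\in\mathcal{T}$ with $Hg=H\overline{g}$. *)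

From mathcomp Require Import all_boot all_order all_algebra.
Set Implicit Arguments. Unset Strict Implicit. Unset Printing Implicit Defensive.
Import Order.TTheory GRing.Theory Num.Theory.
Local Open Scope ring_scope.

(* Integer 2x2 matrices; 'M[int]_2 is a unit ring, so x ^ (z : int) is
   available (negative powers use the matrix inverse invmx). *)
Notation mat2 := 'M[int]_2.

Definition i0 : 'I_2 := ord0.
Definition i1 : 'I_2 := ord_max.

Definition inSL2 (A : mat2) : Prop := \det A = 1.

Definition inGamma1 (N : nat) (A : mat2) : Prop :=
  inSL2 A /\
  (A i1 i0 = 0 %[mod (N%:Z)])%Z /\
  (A i0 i0 = 1 %[mod (N%:Z)])%Z /\
  (A i1 i1 = 1 %[mod (N%:Z)])%Z.

(* same right coset: Gamma_1(N) g = Gamma_1(N) h  iff  g h^{-1} in Gamma_1(N) *)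
Definition same_rcoset (N : nat) (g h : mat2) : Prop :=
  inGamma1 N (g * h^-1).

(* rep is the right coset representative function of a right transversal
   of Gamma_1(N) in SL_2(Z) (the transversal being the image of rep on
   SL_2(Z)): rep g lies in SL_2(Z) and in the coset of g, depends only on
   the coset of g, and the identity is the representative of its coset. *)
Definition rcoset_rep_fun (N : nat) (rep : mat2 -> mat2) : Prop :=
  [/\ forall g, inSL2 g -> inSL2 (rep g),
      forall g, inSL2 g -> same_rcoset N g (rep g),
      forall g h, inSL2 g -> inSL2 h -> same_rcoset N g h -> rep g = rep h
    & rep 1 = 1].

Definition Ucoc (rep : mat2 -> mat2) (x y : mat2) : mat2 :=
  x * y * (rep (x * y))^-1.

Definition Tmat : mat2 := \matrix_(i, j) (if (i == i1) && (j == i0) then 0 else 1).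

From mathcomp Require Import all_boot all_order all_algebra.
Import Order.TTheory GRing.Theory Num.Theory.
Set Implicit Arguments. Unset Strict Implicit. Unset Printing Implicit Defensive.
Local Open Scope ring_scope.

(* Let x := rep M, so that rep x = x.  For g in SL_2(Z) the conjugate
   g T^(kN) g^-1 = 1 + kN g E_12 g^-1 is congruent to 1 mod N, hence lies in
   Gamma_1(N); so x T^a and x T^r lie in the same right coset when
   a = r mod N, giving rep (x T^a) = rep (x T^r) and rep (x T^N) = x.  The
   identity then reduces to (x T^N x^-1)^q = x T^(qN) x^-1. *)

Lemma exprz_morph (R : unitRingType) (f : int -> R) :
  f 0 = 1 -> {morph f : m n / m + n >-> m * n} -> forall z, f 1 ^ z = f z.
Proof.
move=> f0 fD.
have fX (n : nat) : f 1 ^+ n = f n.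
  elim: n => [|n IHn]; first by rewrite expr0 f0.
  by rewrite exprS IHn -fD -intS.
have fN (n : nat) : (f n)^-1 = f (- n%:Z).
  have fnN : f n * f (- n%:Z) = 1 by rewrite -fD subrr f0.
  have fNn : f (- n%:Z) * f n = 1 by rewrite -fD addNr f0.
  have fn_unit : f n \is a GRing.unit by apply/unitrP; exists (f (- n%:Z)).
  by rewrite -[LHS]mulr1 -fnN mulKr.
by case=> n; rewrite /exprz fX // fN NegzE.
Qed.

Lemma exprz_conj (R : unitRingType) (x y : R) (z : int) :
  x \is a GRing.unit -> y \is a GRing.unit -> (x * y * x^-1) ^ z = x * y ^ z * x^-1.
Proof.
move=> ux uy; pose f z := x * y ^ z * x^-1.
have f0 : f 0 = 1 by rewrite /f expr0z mulr1 mulrV.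
have fD : {morph f : m n / m + n >-> m * n}.
  by move=> m n; rewrite /f exprzDr // !mulrA mulrVK.
by rewrite -[y in LHS]expr1z (exprz_morph f0 fD).
Qed.

Section Transvection.
Variable R : comNzRingType.

Definition transvection (m : R) : 'M[R]_2 := 1 + m *: delta_mx i0 i1.

Lemma transvection0 : transvection 0 = 1.
Proof. by rewrite /transvection scale0r addr0. Qed.

Lemma transvectionD : {morph transvection : m n / m + n >-> m * n}.
Proof.
move=> m n; have E2 : delta_mx i0 i1 * delta_mx i0 i1 = 0 :> 'M[R]_2.
  by rewrite [_ * _]mul_delta_mx_cond.
rewrite /transvection mulrDl !mulrDr !mul1r mulr1 -scalerAl -scalerAr E2.
by rewrite !scaler0 addr0 scalerDl addrA addrAC.
Qed.

Lemma det_transvection m : \det (transvection m) = 1.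
Proof.
rewrite -det_tr det_trig.
  by rewrite big_ord_recl big_ord1 !mxE /= mulr0 addr0 mulr1.
by apply/is_trig_mxP => -[[|[|//]] ?] [[|[|//]] ?] // _; rewrite !mxE /= mulr0 addr0.
Qed.
End Transvection.

Lemma Tmat_exprz (z : int) : Tmat ^ z = transvection z.
Proof.
have -> : Tmat = transvection 1.
  by apply/matrixP => -[[|[|//]] ?] [[|[|//]] ?]; rewrite !mxE.
exact: exprz_morph (@transvection0 _) (@transvectionD _) z.
Qed.

Lemma SL2_unit (g : mat2) : inSL2 g -> g \is a GRing.unit.
Proof. by rewrite unitmxE => ->; rewrite unitr1. Qed.

Lemma SL2M (g h : mat2) : inSL2 g -> inSL2 h -> inSL2 (g * h).
Proof. by rewrite /inSL2 detM => -> ->; rewrite mulr1. Qed.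

Lemma SL2V (g : mat2) : inSL2 g -> inSL2 g^-1.
Proof. by move=> g1; rewrite /inSL2 det_inv g1 invr1. Qed.

Lemma SL2_Tmat (z : int) : inSL2 (Tmat ^ z).
Proof. by rewrite Tmat_exprz /inSL2 det_transvection. Qed.

Lemma Tmat_unit : Tmat \is a GRing.unit.
Proof. by rewrite -[Tmat]expr1z; apply/SL2_unit/SL2_Tmat. Qed.

Lemma inGamma1_1_plus_scale (N : nat) (X : mat2) :
  inSL2 (1 + N%:Z *: X) -> inGamma1 N (1 + N%:Z *: X).
Proof.
move=> SL2_A; split=> //; rewrite !mxE /=.
by rewrite ![_ + N%:Z * _]addrC ![N%:Z * _]mulrC !modzMDl.
Qed.

Lemma inGamma1_conj_Tmat (N : nat) (g : mat2) (k : int) :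
  inSL2 g -> inGamma1 N (g * Tmat ^ (k * N%:Z) * g^-1).
Proof.
move=> g1; set A := _ * _ * _.
have A1 : inSL2 A by apply: SL2M; [apply: SL2M => //; apply: SL2_Tmat | apply: SL2V].
have A_E : A = 1 + N%:Z *: (k *: (g * delta_mx i0 i1 * g^-1)).
  rewrite /A Tmat_exprz /transvection mulrDr mulr1 mulrDl (mulrV (SL2_unit g1)).
  by rewrite -[g * (_ *: _)]scalerAr -scalerAl scalerA [N%:Z * _]mulrC.
by rewrite A_E in A1 *; apply: inGamma1_1_plus_scale.
Qed.

Lemma same_rcoset_mul_Tmat (N : nat) (g : mat2) (k m : int) :
  inSL2 g -> same_rcoset N (g * Tmat ^ (k * N%:Z + m)) (g * Tmat ^ m).
Proof.
move=> g1; have g_unit := SL2_unit g1; have Tm_unit := unitrXz m Tmat_unit.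
rewrite /same_rcoset (exprzDr Tmat_unit) mulrA invrM // mulrA mulrK //.
exact: inGamma1_conj_Tmat.
Qed.

Section CosetRepresentatives.
Variables (N : nat) (rep : mat2 -> mat2).
Hypothesis rep_fun : rcoset_rep_fun N rep.

Lemma rep_mul_Tmat_modN (g : mat2) (k m : int) :
  inSL2 g -> rep (g * Tmat ^ (k * N%:Z + m)) = rep (g * Tmat ^ m).
Proof.
case: rep_fun => _ _ rep_eq _ g1.
apply: rep_eq; try exact: SL2M g1 (SL2_Tmat _).
exact: same_rcoset_mul_Tmat.
Qed.

Lemma rep_mul_Tmat_N (g : mat2) : inSL2 g -> rep (rep g * Tmat ^ N%:Z) = rep g.
Proof.
case: rep_fun => rep_SL2 rep_rcoset rep_eq _ g1.
have := rep_mul_Tmat_modN 1 0 (rep_SL2 g g1).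
rewrite mul1r addr0 expr0z mulr1 => ->.
by symmetry; apply: rep_eq => //; [exact: rep_SL2 | exact: rep_rcoset].
Qed.

End CosetRepresentatives.

Theorem lemma2p18 (N : nat) (hN : (1 <= N)%N) (rep : mat2 -> mat2)
    (hrep : rcoset_rep_fun N rep) (a q : int) (r : nat) (hr : (r < N)%N)
    (ha : a = q * N%:Z + r%:Z) (M : mat2) (hM : inSL2 M) :
  Ucoc rep (rep M) (Tmat ^ a) =
    (Ucoc rep (rep M) (Tmat ^ N%:Z)) ^ q * Ucoc rep (rep M) (Tmat ^ r%:Z).
Proof.
have [rep_SL2 _ _ _] := hrep; have x1 := rep_SL2 M hM.
have x_unit := SL2_unit x1.
rewrite /Ucoc (rep_mul_Tmat_N hrep hM) ha (rep_mul_Tmat_modN hrep _ _ x1).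
rewrite (exprz_conj _ x_unit (unitrXz _ Tmat_unit)) exprz_exp [N%:Z * q]mulrC.
by rewrite (exprzDr Tmat_unit) !mulrA mulrVK.
Qed.
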